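(* Let $r>1$ and integers $N\ge1$, $K\ge2$, and let $\mathcal{A}=\{\emptyset,\{1\},\dots,\{N\}\}$ (single item auction). Then the worst case efficiency loss ratio with possibly different priors satisfies $$\eta(r,K;\mathcal{A})\ge\frac{\gamma^*(r,K,1)-\left(1-\frac1r\right)}{1+\gamma^*(r,K,1)},\qquad\text{where } \gamma^*(r,K,1)=(K-1)\left(1-r^{-\frac1{K-1}}\right).$$
   Context: Buyer $n\in\{1,\dots,N\}$ has type $X_n$, a discrete random variable taking values $0<x_n^1<\dots<x_n^{K_n}$ with probabilities $p_n^i>0$; $X_1,\dots,X_N$ independent. An allocation rule $\pi$ maps each bid vector $v$ ($v_n\in\{x_n^1,\dots,x_n^{K_n}\}$) to a probability distribution on $\mathcal{A}$; $Q_n(v)=\sum_{A\ni n}\pi_A(v)$. Virtual valuation: $w_n(x_n^i)=x_n^i-(x_n^{i+1}-x_n^i)\frac{\sum_{j>i}p_n^j}{p_n^i}$ for $i<K_n$, $w_n(x_n^{K_n})=x_n^{K_n}$. Monotone virtual valuation: with $(g_n^0,h_n^0)=(0,-x_n^1)$, $(g_n^i,h_n^i)=(\sum_{j\le i}p_n^j,-x_n^{i+1}\sum_{j>i}p_n^j)$ for $1\le i\le K_n-1$, $(g_n^{K_n},h_n^{K_n})=(1,0)$, let $\overline{h}_n^i$ be the value at $g_n^i$ of the lower convex hull of these points and $\overline{w}_n(x_n^i)=(\overline{h}_n^i-\overline{h}_n^{i-1})/(g_n^i-g_n^{i-1})$. An allocation rule is optimal (allocation rule of a revenue-maximizing Bayesian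 incentive compatible, individually rational mechanism) if for every $v$, $\pi(v)$ is supported on $\arg\max_{A\in\mathcal{A}}\sum_{n\in A}\overline{w}_n(v_n)$, with consistent tie-breaking: if $v_n<v_n'$ and $\overline{w}_n(v_n)=\overline{w}_n(v_n')$ then $Q_n(v_n,v_{-n})\le Q_n(v_n',v_{-n})$. $\tilde\pi^o$ is an optimal allocation rule maximizing realized welfare $\mathbb{E}[\sum_nQ_n(X)X_n]$ among optimal rules. $\mathrm{MSW}=\mathbb{E}[\max_nX_n]$, $\mathrm{ELR}(\pi)=(\mathrm{MSW}-\mathbb{E}[\sum_nQ_n(X)X_n])/\mathrm{MSW}$. $\mathcal{D}_{r,K}$: all such type distributions with $K_n\le K$, $x_n^1>0$, $p_n^i>0$, $(\max_nx_n^{K_n})/(\min_nx_n^1)\le r$; $\eta(r,K;\mathcal{A})=\sup_{\mathcal{D}_{r,K}}\mathrm{ELR}(\tilde\pi^o)$. *)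

From HB Require Import structures.
From mathcomp Require Import all_boot all_order all_algebra.
From mathcomp Require Import boolp classical_sets reals exp.


Import Order.TTheory GRing.Theory Num.Theory.
Local Open Scope ring_scope.
Local Open Scope classical_set_scope.

(* Buyer n has Kn n types;
   type index k : 'I_(Kn n) (0-based) stands for the paper's x_n^{k+1},
   with value xv n k and probability pr n k.  Independence of the X_n is
   encoded by the product form of the profile probability [prob]. *)
Record instance (R : realType) (N : nat) := Instance {
  Kn : 'I_N -> nat ;
  xv : forall n : 'I_N, 'I_(Kn n) -> R ;
  pr : forall n : 'I_N, 'I_(Kn n) -> R }.
Arguments Kn {R N} i _ : rename.
Arguments xv {R N} i _ _ : rename.
Arguments pr {R N} i _ _ : rename.

Definition profile {R : realType} {N : nat} (I : instance R N) : finType :=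
  {dffun forall n : 'I_N, 'I_(Kn I n)}.

(* x_n^{k+1} and p_n^{k+1} accessed by a natural number k (0 if out of range) *)
Definition xat {R : realType} {N : nat} (I : instance R N) (n : 'I_N) (k : nat) : R :=
  if (insub k : option 'I_(Kn I n)) is Some j then xv I n j else 0.

(* The points (g_n^i, h_n^i), i = 0 .. K_n (paper's 1-based indices). *)
Definition gpt {R : realType} {N : nat} (I : instance R N) (n : 'I_N) (i : nat) : R :=
  if i == 0%N then 0
  else if (i < Kn I n)%N then \sum_(j < Kn I n | (j < i)%N) pr I n j
  else 1.

Definition hpt {R : realType} {N : nat} (I : instance R N) (n : 'I_N) (i : nat) : R :=
  if i == 0%N then - xat I n 0
  else if (i < Kn I n)%N then - xat I n i * \sum_(j < Kn I n | (i <= j)%N) pr I n j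
  else 0.

(* value at g_n^i of the lower convex hull of the points (g_n^j, h_n^j) *)
Definition hbar {R : realType} {N : nat} (I : instance R N) (n : 'I_N) (i : nat) : R :=
  inf [set y : R | exists lam : 'I_(Kn I n).+1 -> R,
         [/\ (forall j, 0 <= lam j),
             \sum_j lam j = 1,
             \sum_j lam j * gpt I n j = gpt I n i &
             y = \sum_j lam j * hpt I n j]].

(* monotone virtual valuation of type x_n^{k+1} (paper index i = k+1) *)
Definition wbar {R : realType} {N : nat} (I : instance R N) (n : 'I_N) (k : 'I_(Kn I n)) : R :=
  (hbar I n k.+1 - hbar I n k) / (gpt I n k.+1 - gpt I n k).

(* Single item auction: the outcome set {emptyset, {1}, ..., {N}} is
   option 'I_N (None = emptyset, Some n = {n}). *)
Definition alloc {R : realType} {N : nat} (I : instance R N) :=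
  profile I -> option 'I_N -> R.

Definition is_alloc {R : realType} {N : nat} (I : instance R N) (pi : alloc I) :=
  forall v, (forall a, 0 <= pi v a) /\ \sum_a pi v a = 1.

Definition Q {R : realType} {N : nat} (I : instance R N) (pi : alloc I)
  (n : 'I_N) (v : profile I) : R := pi v (Some n).

(* sum_{n in A} wbar_n(v_n) *)
Definition score {R : realType} {N : nat} (I : instance R N) (v : profile I)
  (a : option 'I_N) : R :=
  if a is Some n then wbar I n (v n) else 0.

Definition is_optimal {R : realType} {N : nat} (I : instance R N) (pi : alloc I) :=
  [/\ is_alloc I pi,
      (forall v a, 0 < pi v a -> forall b, score I v b <= score I v a) &
      (forall n (v v' : profile I), (forall m, m != n -> v m = v' m) ->
         xv I n (v n) < xv I n (v' n) -> wbar I n (v n) = wbar I n (v' n) ->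
         Q I pi n v <= Q I pi n v')].

Definition prob {R : realType} {N : nat} (I : instance R N) (v : profile I) : R :=
  \prod_n pr I n (v n).

Definition welfare {R : realType} {N : nat} (I : instance R N) (pi : alloc I) : R :=
  \sum_(v : profile I) prob I v * \sum_n Q I pi n v * xv I n (v n).

Definition MSW {R : realType} {N : nat} (I : instance R N) : R :=
  \sum_(v : profile I) prob I v * \big[Num.max/0]_n xv I n (v n).

Definition ELR {R : realType} {N : nat} (I : instance R N) (pi : alloc I) : R :=
  (MSW I - welfare I pi) / MSW I.

Definition is_tilde_opt {R : realType} {N : nat} (I : instance R N) (pi : alloc I) :=
  is_optimal I pi /\ forall pi' : alloc I, is_optimal I pi' -> welfare I pi' <= welfare I pi.

Definition in_D {R : realType} {N : nat} (r : R) (K : nat) (I : instance R N) :=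
  (forall n : 'I_N,
     [/\ (0 < Kn I n)%N, (Kn I n <= K)%N, (forall i, 0 < xv I n i) &
         (forall i j : 'I_(Kn I n), (i < j)%N -> xv I n i < xv I n j)] /\
     (forall i, 0 < pr I n i) /\
         \sum_i pr I n i = 1) /\
  (forall (n m : 'I_N) (i : 'I_(Kn I n)) (j : 'I_(Kn I m)), xv I n i / xv I m j <= r).

Definition gamma_star {R : realType} (r : R) (K : nat) : R :=
  (K.-1)%:R * (1 - powR r (- ((K.-1)%:R)^-1)).

From HB Require Import structures.
From mathcomp Require Import all_boot all_order all_algebra.
From mathcomp Require Import boolp classical_sets reals exp.
From mathcomp Require Import ring lra.
Set Implicit Arguments.
Unset Strict Implicit.
Unset Printing Implicit Defensive.
Import Order.TTheory GRing.Theory Num.Theory.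
Local Open Scope ring_scope.

(* The bound is approached by a single instance family, with K - 1 = L + 1
   and rho = r^(1/(K-1)).  Buyer n0 has types rho^0, ..., rho^(L+1) = r
   with equal-revenue tails P(X >= rho^j) = rho^-j for j <= L, except that the
   top type has mass c/r for some c slightly above 1; every other buyer has the
   single type 1.  The revenue curve of buyer n0 is then flat except for a dip
   at the top, so ironing gives all his types below r the same negative
   virtual value, and the top type the virtual value r.  Every optimal rule
   therefore sells to n0 only at type r, and otherwise to a buyer of value 1
   (or to nobody when N = 1): the realized welfare is at most
   1 + c (1 - 1/r), while the maximal social welfare is about
   1 + (L + 1)(1 - 1/rho) = 1 + gamma*(r, K, 1). *)

Lemma loss_ratio_gt (R : realFieldType) (r g d W c eps : R) :
  1 < r -> 0 <= g -> 0 <= d -> 0 <= W -> W <= 1 + c * (1 - r^-1) ->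
  c < 1 + eps -> 0 < eps ->
  (g - (1 - r^-1)) / (1 + g) - eps < (1 + g + d - W) / (1 + g + d).
Proof.
move=> r_gt1 g_ge0 d_ge0 W_ge0 W_le c_lt eps_gt0.
have rV_gt0 : 0 < r^-1 by rewrite invr_gt0; lra.
have rV_lt1 : r^-1 < 1 by rewrite invf_lt1 //; lra.
set G := 1 + g.
have G_gt0 : 0 < G by rewrite /G; lra.
have denom_le : (G - W) / G <= (G + d - W) / (G + d).
  rewrite !mulrBl !mulfV ?gt_eqF ?lerD2l ?lerN2; try lra.
  by rewrite ler_wpM2l // lef_pV2 ?posrE; lra.
apply: lt_le_trans denom_le.
have -> : (g - (1 - r^-1)) / G - eps = (g - (1 - r^-1) - eps * G) / G.
  by field; rewrite !gt_eqF //; lra.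
rewrite ltr_pM2r ?invr_gt0 //.
have : c * (1 - r^-1) < (1 + eps) * (1 - r^-1) by rewrite ltr_pM2r ?subr_gt0.
have : 0 <= eps * (g + r^-1) by rewrite mulr_ge0 //; lra.
rewrite /G; lra.
Qed.

Lemma big_option_sum (V : nmodType) (T : finType) (F : option T -> V) :
  \sum_a F a = F None + \sum_t F (Some t).
Proof.
rewrite (bigD1 None) //=; congr (_ + _).
rewrite (@reindex_omap _ _ _ _ _ Some id) /=; last by case.
by apply: eq_bigl => t; rewrite eqxx.
Qed.

Lemma sum_indicator (V : pzSemiRingType) (T : finType) (t0 : T) (f : T -> V) :
  \sum_t (t == t0)%:R * f t = f t0.
Proof.
rewrite (bigD1 t0) //= eqxx mul1r big1 ?addr0 // => t /negbTE->.
by rewrite mul0r.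
Qed.

Section InstanceFacts.
Variables (R : realType) (N : nat) (I : instance R N).

Lemma hbar_supporting_line n i (j1 j2 : 'I_(Kn I n).+1) (t al be : R) :
  0 <= t <= 1 ->
  (1 - t) * gpt I n j1 + t * gpt I n j2 = gpt I n i ->
  (forall j : 'I_(Kn I n).+1, al + be * gpt I n j <= hpt I n j) ->
  al + be * gpt I n j1 = hpt I n j1 -> al + be * gpt I n j2 = hpt I n j2 ->
  hbar I n i = al + be * gpt I n i.
Proof.
move=> /andP[t_ge0 t_le1] g_comb line_below touch1 touch2.
pose lam (j : 'I_(Kn I n).+1) := (1 - t) * (j == j1)%:R + t * (j == j2)%:R.
have lam_comb (f : nat -> R) : \sum_j lam j * f j = (1 - t) * f j1 + t * f j2.
  under eq_bigr do rewrite mulrDl -!mulrA.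
  by rewrite big_split /= -!big_distrr /= !sum_indicator.
rewrite /hbar; set E := (X in inf X).
have E_line : E (al + be * gpt I n i).
  exists lam; split.
  - by move=> j; rewrite addr_ge0 // mulr_ge0 ?ler0n // subr_ge0.
  - have := lam_comb (fun=> 1); rewrite !mulr1 subrK => <-.
    by apply: eq_bigr => j; rewrite mulr1.
  - by rewrite lam_comb.
  - by rewrite lam_comb -touch1 -touch2 -g_comb; ring.
have E_lb : lbound E (al + be * gpt I n i).
  move=> _ [mu [mu_ge0 mu_sum1 mu_g ->]].
  rewrite -mu_g -[al]mul1r -mu_sum1 big_distrl big_distrr -big_split /=.
  apply: ler_sum => j _; rewrite mulrCA -mulrDr.
  exact: ler_wpM2l.
apply/le_anti/andP; split.
  by apply: ge_inf => //; exists (al + be * gpt I n i).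
by apply: lb_le_inf => //; exists (al + be * gpt I n i).
Qed.

Lemma hbar_vertex n i (al be : R) : (i <= Kn I n)%N ->
  (forall j : 'I_(Kn I n).+1, al + be * gpt I n j <= hpt I n j) ->
  al + be * gpt I n i = hpt I n i ->
  hbar I n i = al + be * gpt I n i.
Proof.
rewrite -ltnS => i_lt below touch.
apply: (hbar_supporting_line (j1 := Ordinal i_lt) (j2 := Ordinal i_lt) (t := 0)) => //.
  by rewrite lexx ler01.
by rewrite subr0 mul1r mul0r addr0.
Qed.

Lemma wbar_on_line n (k : 'I_(Kn I n)) (al be : R) :
  gpt I n k.+1 != gpt I n k ->
  hbar I n k = al + be * gpt I n k -> hbar I n k.+1 = al + be * gpt I n k.+1 ->
  wbar I n k = be.
Proof.
move=> g_neq hbar_k hbar_k1.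
by rewrite /wbar hbar_k hbar_k1; field; rewrite subr_eq0.
Qed.

Definition outcome_value (v : profile I) (a : option 'I_N) : R :=
  if a is Some n then xv I n (v n) else 0.

Lemma optimal_realized_value (pi : alloc I) (v : profile I) (w : R) :
  is_optimal I pi ->
  (forall a, (forall b, score I v b <= score I v a) -> outcome_value v a = w) ->
  \sum_n Q I pi n v * xv I n (v n) = w.
Proof.
case=> /(_ v) [pi_ge0 pi_sum1] pi_argmax _ argmax_value.
have -> : \sum_n Q I pi n v * xv I n (v n) = \sum_a pi v a * outcome_value v a.
  by rewrite big_option_sum /= mulr0 add0r.
rewrite -[w]mul1r -pi_sum1 big_distrl /=; apply: eq_bigr => a _.
have := pi_ge0 a; rewrite le_eqVlt => /orP[/eqP <-|pi_gt0]; first by rewrite !mul0r.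
by rewrite argmax_value // => b; apply: pi_argmax pi_gt0 b.
Qed.

Lemma tilde_opt_of_argmax_value (pi : alloc I) (w : profile I -> R) :
  is_optimal I pi ->
  (forall v a, (forall b, score I v b <= score I v a) -> outcome_value v a = w v) ->
  is_tilde_opt I pi /\ welfare I pi = \sum_v prob I v * w v.
Proof.
move=> pi_opt argmax_value.
have welfareE pi' : is_optimal I pi' -> welfare I pi' = \sum_v prob I v * w v.
  move=> pi'_opt; apply: eq_bigr => v _.
  by rewrite (optimal_realized_value pi'_opt (argmax_value v)).
split; last exact: welfareE.
by split=> // pi' pi'_opt; rewrite !welfareE.
Qed.

End InstanceFacts.

Section EqualRevenueInstance.
Variables (R : realType) (r : R) (N L : nat) (rho c : R).
Hypotheses (N_gt0 : (0 < N)%N) (rho_gt1 : 1 < rho) (rhoXL : rho ^+ L.+1 = r)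
  (c_gt1 : 1 < c) (c_lt_rho : c < rho).

Lemma rho_gt0 : 0 < rho. Proof. exact: lt_trans ltr01 rho_gt1. Qed.
Lemma c_gt0 : 0 < c. Proof. exact: lt_trans ltr01 c_gt1. Qed.

Lemma rhoX_ge1 j : 1 <= rho ^+ j.
Proof. exact/exprn_ege1/ltW. Qed.

Lemma rhoX_le_r j : (j <= L.+1)%N -> rho ^+ j <= r.
Proof. by move=> j_le; rewrite -rhoXL ler_eXn2l. Qed.

Lemma r_gt1 : 1 < r.
Proof. by rewrite -rhoXL exprn_egt1. Qed.

Lemma r_gt0 : 0 < r.
Proof. exact: lt_trans r_gt1. Qed.

Lemma c_lt_r : c < r.
Proof. by apply: (lt_le_trans c_lt_rho); rewrite -[leLHS]expr1 rhoX_le_r. Qed.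

Lemma cr_gt0 : 0 < c / r.
Proof. exact: divr_gt0 c_gt0 r_gt0. Qed.

Lemma cr_lt1 : c / r < 1.
Proof. by rewrite ltr_pdivrMr ?r_gt0 // mul1r c_lt_r. Qed.

Lemma cr_lt_rhoXV j : (j <= L)%N -> c / r < (rho ^+ j)^-1.
Proof.
move=> j_le; have rhoXj_gt0 : 0 < rho ^+ j by rewrite exprn_gt0 ?rho_gt0.
rewrite ltr_pdivrMr ?r_gt0 // -rhoXL -(subnK j_le) -addSn exprD mulrCA mulVf ?gt_eqF //.
rewrite mulr1; apply: (lt_le_trans c_lt_rho).
by rewrite exprS ler_peMr ?rhoX_ge1 // ltW ?rho_gt0.
Qed.

(* The tails P(X_n0 >= rho^j) of the distinguished buyer, for all j : nat. *)
Definition tail0 (j : nat) : R :=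
  if (j <= L)%N then (rho ^+ j)^-1 else if j == L.+1 then c / r else 0.

Lemma tail0_low j : (j <= L)%N -> tail0 j = (rho ^+ j)^-1.
Proof. by rewrite /tail0 => ->. Qed.

Lemma tail0_top : tail0 L.+1 = c / r.
Proof. by rewrite /tail0 ltnn eqxx. Qed.

Lemma tail0_out j : (L.+1 < j)%N -> tail0 j = 0.
Proof. by move=> j_gt; rewrite /tail0 leqNgt (ltnW j_gt) /= gtn_eqF. Qed.

Lemma tail0_ge0 j : 0 <= tail0 j.
Proof.
rewrite /tail0; case: ifP => _; first by rewrite invr_ge0 exprn_ge0 ?ltW ?rho_gt0.
by case: ifP => _ //; exact: ltW cr_gt0.
Qed.

Lemma tail0_le1 j : tail0 j <= 1.
Proof.
rewrite /tail0; case: ifP => _; first by rewrite invf_le1 ?rhoX_ge1 // exprn_gt0 ?rho_gt0.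
by case: ifP => _; [exact: ltW cr_lt1 | exact: ler01].
Qed.

Lemma cr_le_tail0 j : (j <= L.+1)%N -> c / r <= tail0 j.
Proof.
rewrite leq_eqVlt => /orP[/eqP->|j_lt]; first by rewrite tail0_top.
by rewrite tail0_low // ltW // cr_lt_rhoXV.
Qed.

Definition n0 : 'I_N := Ordinal N_gt0.

Definition tail (n : 'I_N) (j : nat) : R := if n == n0 then tail0 j else (j == 0)%:R.
Definition typeval (n : 'I_N) (j : nat) : R := if n == n0 then rho ^+ j else 1.
Definition mass (n : 'I_N) (j : nat) : R := tail n j - tail n j.+1.
Definition ntypes (n : 'I_N) : nat := (if n == n0 then L.+1 else 0).+1.

Definition inst : instance R N :=
  @Instance R N ntypes (fun n k => typeval n k) (fun n k => mass n k).

Lemma Kn_inst n : Kn inst n = ntypes n. Proof. by []. Qed.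
Lemma xv_inst n k : xv inst n k = typeval n k. Proof. by []. Qed.
Lemma ntypes_n0 : ntypes n0 = L.+2. Proof. by rewrite /ntypes eqxx. Qed.
Lemma tail_n0 j : tail n0 j = tail0 j. Proof. by rewrite /tail eqxx. Qed.
Lemma typeval_n0 j : typeval n0 j = rho ^+ j. Proof. by rewrite /typeval eqxx. Qed.

Section OtherBuyers.
Variables (n : 'I_N) (n_neq0 : n != n0).
Lemma ntypes_other : ntypes n = 1%N. Proof. by rewrite /ntypes (negbTE n_neq0). Qed.
Lemma tail_other j : tail n j = (j == 0)%:R. Proof. by rewrite /tail (negbTE n_neq0). Qed.
Lemma typeval_other j : typeval n j = 1. Proof. by rewrite /typeval (negbTE n_neq0). Qed.
End OtherBuyers.

Lemma type_other n (j : 'I_(Kn inst n)) : n != n0 -> j = 0%N :> nat.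
Proof.
move=> n_neq; have : (j < ntypes n)%N := ltn_ord j.
by rewrite ntypes_other // ltnS leqn0 => /eqP.
Qed.

Lemma tail_0 n : tail n 0 = 1.
Proof. by rewrite /tail /tail0; case: ifP => //= _; rewrite expr0 invr1. Qed.

Lemma tail_ntypes n : tail n (ntypes n) = 0.
Proof. by rewrite /tail /ntypes; case: (n == n0) => //; rewrite tail0_out. Qed.

Lemma mass_gt0 n j : (j < ntypes n)%N -> 0 < mass n j.
Proof.
rewrite /mass /tail /ntypes; case: (n == n0) => /=; last first.
  by rewrite ltnS leqn0 => /eqP->; rewrite subr0 ltr01.
rewrite ltnS leq_eqVlt => /orP[/eqP->|].
  by rewrite tail0_top tail0_out ?subr0 ?cr_gt0.
rewrite ltnS leq_eqVlt => /orP[/eqP->|j_lt].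
  by rewrite tail0_top tail0_low // subr_gt0 cr_lt_rhoXV.
rewrite (tail0_low (ltnW j_lt)) (tail0_low j_lt) exprS invfM.
rewrite -[X in X - _]mul1r -mulrBl mulr_gt0 //.
  by rewrite subr_gt0 invf_lt1 ?rho_gt0.
by rewrite invr_gt0 exprn_gt0 ?rho_gt0.
Qed.

Lemma sum_mass_lt n k : \sum_(j < k) mass n j = 1 - tail n k.
Proof.
rewrite -(big_mkord xpredT (mass n)) -[LHS]opprK -sumrN.
under eq_bigr do rewrite opprB.
by rewrite telescope_sumr // tail_0 opprB.
Qed.

Lemma sum_mass_ge n i : (i <= ntypes n)%N ->
  \sum_(j < ntypes n | (i <= j)%N) mass n j = tail n i.
Proof.
move=> i_le; rewrite -(big_geq_mkord i (ntypes n) xpredT (mass n)) -[LHS]opprK -sumrN.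
under eq_bigr do rewrite opprB.
by rewrite telescope_sumr // tail_ntypes opprB subr0.
Qed.

Lemma sum_mass n : \sum_(j < ntypes n) mass n j = 1.
Proof. by rewrite sum_mass_lt tail_ntypes subr0. Qed.

Lemma gpt_inst n i : (i <= ntypes n)%N -> gpt inst n i = 1 - tail n i.
Proof.
move=> i_le; rewrite /gpt /=.
case: eqP => [->|_]; first by rewrite tail_0 subrr.
case: ltnP => i_ntypes.
  by rewrite -(big_ord_widen _ (mass n) (ltnW i_ntypes)) sum_mass_lt.
have -> : i = ntypes n by apply/eqP; rewrite eqn_leq i_le i_ntypes.
by rewrite tail_ntypes subr0.
Qed.

Lemma hpt_inst n i : (i <= ntypes n)%N -> hpt inst n i = - (typeval n i * tail n i).
Proof.
move=> i_le; rewrite /hpt /xat /=.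
case: eqP => [->|_]; first by rewrite insubT // tail_0 mulr1.
case: ltnP => i_ntypes.
  by rewrite insubT /= sum_mass_ge ?(ltnW i_ntypes) // mulNr.
have -> : i = ntypes n by apply/eqP; rewrite eqn_leq i_le i_ntypes.
by rewrite tail_ntypes mulr0 oppr0.
Qed.

Lemma gpt_n0 j : (j <= L.+2)%N -> gpt inst n0 j = 1 - tail0 j.
Proof. by move=> j_le; rewrite gpt_inst ?ntypes_n0 ?tail_n0. Qed.

Lemma hpt_n0 j : (j <= L.+2)%N -> hpt inst n0 j = - (rho ^+ j * tail0 j).
Proof. by move=> j_le; rewrite hpt_inst ?ntypes_n0 ?typeval_n0 ?tail_n0. Qed.

Lemma tail0_0 : tail0 0 = 1.
Proof. by rewrite tail0_low // expr0 invr1. Qed.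

(* The common ironed virtual value of all non-top types of buyer n0: the slope
   of the segment from (0, -1) to (1 - c/r, -c). *)
Definition wlow : R := (1 - c) / (1 - c / r).

Lemma wlow_lt0 : wlow < 0.
Proof. by rewrite /wlow ltr_pdivrMr ?subr_gt0 ?cr_lt1 // mul0r subr_lt0. Qed.

Lemma hbar_n0_low i : (i <= L.+1)%N -> hbar inst n0 i = -1 + wlow * gpt inst n0 i.
Proof.
move=> i_le.
have top_lt : (L.+1 < (Kn inst n0).+1)%N by rewrite Kn_inst ntypes_n0.
have one_sub_cr_gt0 : 0 < 1 - c / r by rewrite subr_gt0 cr_lt1.
have touch0 : -1 + wlow * gpt inst n0 0 = hpt inst n0 0.
  by rewrite gpt_n0 // hpt_n0 // tail0_0 expr0 subrr mulr0 mulr1 addr0.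
have touch_top : -1 + wlow * gpt inst n0 L.+1 = hpt inst n0 L.+1.
  rewrite gpt_n0 // hpt_n0 // tail0_top rhoXL /wlow.
  by field; rewrite gt_eqF ?r_gt0 // subr_eq0 gt_eqF // c_lt_r.
pose t := (1 - tail0 i) / (1 - c / r).
have t_in01 : 0 <= t <= 1.
  apply/andP; split; first by rewrite divr_ge0 ?(ltW one_sub_cr_gt0) // subr_ge0 tail0_le1.
  by rewrite /t ler_pdivrMr // mul1r lerD2l lerN2 cr_le_tail0.
have g_comb : (1 - t) * gpt inst n0 0 + t * gpt inst n0 L.+1 = gpt inst n0 i.
  rewrite (gpt_n0 (leq0n _)) (gpt_n0 (leqnSn _)) (gpt_n0 (leqW i_le)).
  by rewrite tail0_0 tail0_top subrr mulr0 add0r /t mulfVK // gt_eqF.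
apply: (hbar_supporting_line (j1 := ord0) (j2 := Ordinal top_lt) t_in01 g_comb) => //.
move=> j; have j_le : (j <= L.+2)%N by rewrite -ltnS -ntypes_n0.
case: (ltngtP j L.+1) => [j_lt|j_gt|->]; last by rewrite touch_top.
  rewrite (gpt_n0 j_le) (hpt_n0 j_le) tail0_low // mulfV ?gt_eqF ?exprn_gt0 ?rho_gt0 //.
  rewrite gerDl nmulr_rle0 ?wlow_lt0 // subr_ge0.
  by rewrite invf_le1 ?rhoX_ge1 ?exprn_gt0 ?rho_gt0.
rewrite (gpt_n0 j_le) (hpt_n0 j_le) tail0_out // subr0 mulr0 oppr0 mulr1.
by have := wlow_lt0; lra.
Qed.

Lemma hbar_n0_high i : (L.+1 <= i <= L.+2)%N -> hbar inst n0 i = - r + r * gpt inst n0 i.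
Proof.
move=> /andP[i_ge i_le].
apply: hbar_vertex => [|j|]; first by rewrite Kn_inst ntypes_n0.
  have j_le : (j <= L.+2)%N by rewrite -ltnS -ntypes_n0.
  rewrite (gpt_n0 j_le) (hpt_n0 j_le) mulrBr mulr1 addKr lerN2.
  move: j_le; rewrite leq_eqVlt ltnS => /orP[/eqP->|j_le]; first by rewrite tail0_out ?mulr0.
  by rewrite ler_wpM2r ?tail0_ge0 ?rhoX_le_r.
rewrite (gpt_n0 i_le) (hpt_n0 i_le) mulrBr mulr1 addKr.
move: i_ge; rewrite leq_eqVlt => /orP[/eqP<-|i_gt].
  by rewrite tail0_top rhoXL.
by rewrite tail0_out // !mulr0 oppr0.
Qed.

Lemma hbar_other n i : n != n0 -> (i <= 1)%N -> hbar inst n i = -1 + 1 * gpt inst n i.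
Proof.
move=> n_neq i_le.
have ntypes_n : Kn inst n = 1%N by rewrite Kn_inst ntypes_other.
apply: hbar_vertex => [|j|]; first by rewrite ntypes_n.
  have j_le : (j <= 1)%N by rewrite -ltnS -ntypes_n.
  rewrite gpt_inst ?hpt_inst ?ntypes_other // typeval_other // tail_other //.
  by rewrite !mul1r addKr.
rewrite gpt_inst ?hpt_inst ?ntypes_other // typeval_other // tail_other //.
by rewrite !mul1r addKr.
Qed.

Lemma wbar_inst n (k : 'I_(Kn inst n)) :
  wbar inst n k = if n == n0 then (if (k : nat) == L.+1 then r else wlow) else 1.
Proof.
have k_lt : (k < ntypes n)%N := ltn_ord k.
have g_neq : gpt inst n k.+1 != gpt inst n k.
  rewrite !gpt_inst ?(ltnW k_lt) //; apply/eqP => g_eq.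
  by have := mass_gt0 k_lt; rewrite /mass; lra.
case: eqP => [n_eq|/eqP n_neq]; last first.
  by apply: (wbar_on_line (al := -1)) g_neq _ _; rewrite hbar_other ?type_other.
subst n; move: k_lt; rewrite ntypes_n0 ltnS leq_eqVlt => /orP[/eqP k_top|k_lt].
  rewrite k_top eqxx; apply: (wbar_on_line (al := - r)) g_neq _ _;
    by rewrite hbar_n0_high // k_top ?leqnn ?leqnSn.
by rewrite ltn_eqF //; apply: (wbar_on_line (al := -1)) g_neq _ _; rewrite hbar_n0_low // ltnW.
Qed.

Definition is_top (v : profile inst) : bool := (v n0 : nat) == L.+1.
Definition other_buyer : option 'I_N := [pick n | n != n0].
Definition best (v : profile inst) : option 'I_N := if is_top v then Some n0 else other_buyer.
Definition pi : alloc inst := fun v a => (a == best v)%:R.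

(* [other_buyer] is [None] exactly when N = 1. *)
Definition other_value : R := if other_buyer is Some _ then 1 else 0.
Definition best_value (v : profile inst) : R := if is_top v then r else other_value.

Lemma score_inst v a : score inst v a =
  if a is Some n then (if n == n0 then (if is_top v then r else wlow) else 1) else 0.
Proof. by case: a => // n; rewrite /score wbar_inst; case: eqP => // ->. Qed.

Variant other_buyer_spec : option 'I_N -> Type :=
  | OtherBuyer n1 of n1 != n0 : other_buyer_spec (Some n1)
  | NoOtherBuyer of (forall n, n = n0) : other_buyer_spec None.

Lemma other_buyerP : other_buyer_spec other_buyer.
Proof.
rewrite /other_buyer; case: pickP => [n1 n1_neq|all_n0]; first exact: OtherBuyer.
by apply: NoOtherBuyer => n; apply/eqP/negbFE/all_n0.
Qed.

Lemma best_argmax v b : score inst v b <= score inst v (best v).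
Proof.
have := wlow_lt0; have := r_gt1.
rewrite !score_inst /best; case: (is_top v).
  by rewrite eqxx; case: b => [n|]; [case: eqP|]; lra.
case: other_buyerP => [n1 n1_neq|all_n0].
  by rewrite (negbTE n1_neq); case: b => [n|]; [case: eqP|]; lra.
by case: b => [n|]; rewrite ?(all_n0 n) ?eqxx; lra.
Qed.

Lemma argmax_value v a : (forall b, score inst v b <= score inst v a) ->
  outcome_value v a = best_value v.
Proof.
move=> a_max; have := wlow_lt0; have := r_gt1.
rewrite /best_value /other_value /outcome_value /=.
case top_v: (is_top v).
  move: (a_max (Some n0)); rewrite !score_inst eqxx top_v.
  case: a {a_max} => [n|]; last lra.
  by case: eqP => [->|_]; rewrite ?typeval_n0 -?rhoXL ?(eqP top_v); lra.
case: other_buyerP => [n1 n1_neq|all_n0].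
  move: (a_max (Some n1)); rewrite !score_inst (negbTE n1_neq) top_v.
  case: a {a_max} => [n|]; last lra.
  by case: eqP => [_|/eqP n_neq]; [lra | rewrite typeval_other].
move: (a_max None); rewrite !score_inst.
case: a {a_max} => // n; rewrite (all_n0 n) eqxx top_v; lra.
Qed.

Lemma pi_optimal : is_optimal inst pi.
Proof.
split.
- move=> v; split=> [a|]; first by rewrite ler0n.
  rewrite (bigD1 (best v)) //= /pi eqxx big1 ?addr0 // => a.
  by move/negbTE->.
- move=> v a; rewrite /pi; case: eqP => [-> _|_]; first exact: best_argmax.
  by rewrite ltxx.
- move=> n v v' same_others xv_lt wbar_eq; rewrite /Q /pi.
  case: (Some n =P best v) => [best_v|_]; last by rewrite ler0n.
  suff -> : best v' = Some n by rewrite eqxx.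
  move: best_v; rewrite /best; case top_v: (is_top v) => best_v.
    case: best_v => n_eq; subst n; move: xv_lt; rewrite !xv_inst !typeval_n0.
    have top_v' : is_top v'.
      apply/negPn/negP => /negbTE ntop_v'; move: wbar_eq; rewrite !wbar_inst eqxx.
      by move: top_v ntop_v'; rewrite /is_top => -> ->; have := wlow_lt0; have := r_gt1; lra.
    by move: top_v top_v'; rewrite /is_top => /eqP-> /eqP->; rewrite ltxx.
  move: best_v; case: other_buyerP => // n1 n1_neq /= [n_eq]; subst n1.
  by rewrite /is_top -same_others ?(eq_sym n0) // -/(is_top v) top_v.
Qed.

(* Only the type of buyer n0 varies, so profiles are indexed by 'I_L.+2. *)
Definition mkprof (k : 'I_L.+2) : profile inst := [ffun n => inord k].
Definition unprof (v : profile inst) : 'I_L.+2 := inord (v n0).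

Lemma mkprof_n0 k : mkprof k n0 = k :> nat.
Proof. by rewrite ffunE inordK // -ntypes_n0. Qed.

Lemma mkprof_other k n : n != n0 -> mkprof k n = 0%N :> nat.
Proof. exact: type_other. Qed.

Lemma mkprofK : cancel mkprof unprof.
Proof. by move=> k; apply: ord_inj; rewrite /unprof mkprof_n0 inordK. Qed.

Lemma unprofK : cancel unprof mkprof.
Proof.
move=> v; apply/ffunP => n; apply: ord_inj.
case: (n =P n0) => [->|/eqP n_neq]; first by rewrite mkprof_n0 inordK ?ltn_ord.
by rewrite !type_other.
Qed.

Lemma sum_profile (F : profile inst -> R) : \sum_v F v = \sum_(k < L.+2) F (mkprof k).
Proof.
by rewrite (reindex mkprof) //; exists unprof => v _; [exact: mkprofK | exact: unprofK].
Qed.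

Lemma prob_mkprof k : prob inst (mkprof k) = mass n0 k.
Proof.
rewrite /prob (bigD1 n0) //= mkprof_n0 big1 ?mulr1 // => n n_neq.
by rewrite mkprof_other // /mass !tail_other //= subr0.
Qed.

Lemma pi_tilde_opt : is_tilde_opt inst pi.
Proof. by have [] := tilde_opt_of_argmax_value pi_optimal argmax_value. Qed.

Lemma welfare_pi : welfare inst pi = c + other_value * (1 - c / r).
Proof.
have [_ ->] := tilde_opt_of_argmax_value pi_optimal argmax_value.
rewrite sum_profile big_ord_recr /= /best_value /is_top !mkprof_n0 eqxx.
under eq_bigr => k _ do rewrite prob_mkprof mkprof_n0 (ltn_eqF (ltn_ord k)).
rewrite -big_distrl /= sum_mass_lt prob_mkprof /mass !tail_n0 tail0_top tail0_out //.
by rewrite subr0 divfK ?gt_eqF ?r_gt0 // addrC mulrC.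
Qed.

Lemma max_typeval_mkprof k : \big[Num.max/0]_n typeval n (mkprof k n) = rho ^+ k.
Proof.
apply/le_anti/andP; split.
  apply: bigmax_le => [|n _]; first by rewrite exprn_ge0 ?ltW ?rho_gt0.
  case: (n =P n0) => [->|/eqP n_neq]; first by rewrite typeval_n0 mkprof_n0.
  by rewrite typeval_other ?rhoX_ge1.
by have := le_bigmax 0 (fun n => typeval n (mkprof k n)) n0; rewrite typeval_n0 mkprof_n0.
Qed.

Lemma mass_typeval_n0 k : (k < L)%N -> mass n0 k * rho ^+ k = 1 - rho^-1.
Proof.
move=> k_lt; have rhoXk_neq0 : rho ^+ k != 0 by rewrite gt_eqF ?exprn_gt0 ?rho_gt0.
rewrite /mass !tail_n0 (tail0_low (ltnW k_lt)) (tail0_low k_lt) exprS.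
by field; rewrite rhoXk_neq0 gt_eqF ?rho_gt0.
Qed.

Lemma MSW_inst : MSW inst = 1 + L.+1%:R * (1 - rho^-1) + (c - 1) * (1 - rho^-1).
Proof.
rewrite /MSW sum_profile.
under eq_bigr => k _ do rewrite prob_mkprof max_typeval_mkprof.
rewrite !big_ord_recr /= (eq_bigr _ (fun k _ => mass_typeval_n0 (ltn_ord k))).
rewrite sumr_const card_ord /mass !tail_n0 tail0_top (tail0_low (leqnn L)) tail0_out //.
rewrite -rhoXL exprS -mulr_natl -natr1.
have rhoXL_neq0 : rho ^+ L != 0 by rewrite gt_eqF ?exprn_gt0 ?rho_gt0.
by field; rewrite rhoXL_neq0 gt_eqF ?rho_gt0.
Qed.

Lemma inst_in_D : in_D r L.+2 inst.
Proof.
have typeval_ge1 n j : 1 <= typeval n j.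
  by rewrite /typeval; case: (n == n0); rewrite ?rhoX_ge1.
have typeval_le_r n (j : 'I_(Kn inst n)) : typeval n j <= r.
  rewrite /typeval; case: (n =P n0) => [n_eq|_]; last exact: ltW r_gt1.
  by rewrite rhoX_le_r // -ltnS -ntypes_n0 -n_eq ltn_ord.
split=> [n|n m i j].
  split; last by split=> [i|]; [exact: mass_gt0 | exact: sum_mass].
  split=> [||i|i j ij_lt] //.
  - by rewrite Kn_inst /ntypes; case: (n == n0).
  - exact: lt_le_trans ltr01 (typeval_ge1 _ _).
  rewrite !xv_inst /typeval; case: (n =P n0) => [n_eq|n_neq]; first by rewrite ltr_eXn2l.
  by move: ij_lt; rewrite (type_other j) ?ltn0 //; apply/eqP.
rewrite !xv_inst ler_pdivrMr ?(lt_le_trans ltr01 (typeval_ge1 _ _)) //.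
by rewrite (le_trans (typeval_le_r n i)) // ler_peMr ?(ltW r_gt0) ?typeval_ge1.
Qed.

Lemma ELR_pi_gt eps : 0 < eps -> c < 1 + eps ->
  (L.+1%:R * (1 - rho^-1) - (1 - r^-1)) / (1 + L.+1%:R * (1 - rho^-1)) - eps < ELR inst pi.
Proof.
move=> eps_gt0 c_lt; rewrite /ELR welfare_pi MSW_inst.
have rhoV_lt1 : rho^-1 < 1 by rewrite invf_lt1 ?rho_gt0.
have one_sub_cr_gt0 : 0 < 1 - c / r by rewrite subr_gt0 cr_lt1.
have [ov_ge0 ov_le1] : 0 <= other_value /\ other_value <= 1.
  by rewrite /other_value; case: other_buyer; rewrite ?ler01 ?lexx.
apply: loss_ratio_gt c_lt eps_gt0; first exact: r_gt1.
- by rewrite mulr_ge0 ?ler0n // subr_ge0 ltW.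
- by rewrite mulr_ge0 // subr_ge0 ltW.
- by rewrite addr_ge0 ?mulr_ge0 ?(ltW c_gt0) ?(ltW one_sub_cr_gt0).
- have -> : 1 + c * (1 - r^-1) = c + (1 - c / r) by ring.
  by rewrite lerD2l ler_piMl ?(ltW one_sub_cr_gt0).
Qed.

End EqualRevenueInstance.

Theorem proposition9 (R : realType) (r : R) (N K : nat) :
  1 < r -> (1 <= N)%N -> (2 <= K)%N ->
  forall eps : R, 0 < eps ->
  exists I : instance R N, in_D r K I /\
    exists pi : alloc I, is_tilde_opt I pi /\
      (gamma_star r K - (1 - r^-1)) / (1 + gamma_star r K) - eps < ELR I pi.
Proof.
move=> r_gt1 N_gt0 K_ge2 eps eps_gt0.
case: K K_ge2 => [|[|L]] // _.
pose rho := powR r L.+1%:R^-1.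
have r_ge0 : 0 <= r by rewrite ltW // (lt_trans ltr01).
have rhoXL : rho ^+ L.+1 = r.
  by rewrite /rho -powR_mulrn ?powR_ge0 // -powRrM mulVf ?pnatr_eq0 // powRr1.
have rho_gt1 : 1 < rho by rewrite -(expr_gt1 (ltn0Sn L) (powR_ge0 _ _)) rhoXL.
pose c := 1 + Num.min eps (rho - 1) / 2.
have min_gt0 : 0 < Num.min eps (rho - 1) by rewrite lt_min eps_gt0 subr_gt0 rho_gt1.
have min_le : Num.min eps (rho - 1) <= eps /\ Num.min eps (rho - 1) <= rho - 1.
  by split; rewrite ge_min lexx ?orbT.
have c_gt1 : 1 < c by rewrite /c; lra.
have c_lt_rho : c < rho by rewrite /c; lra.
have c_lt : c < 1 + eps by rewrite /c; lra.
exists (inst r L rho c N_gt0); split; first exact: inst_in_D.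
exists (@pi _ r _ L rho c N_gt0); split; first exact: pi_tilde_opt.
by rewrite /gamma_star /= powRN -/rho; apply: ELR_pi_gt.
Qed.
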